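(* Let $\eta$ be a homogeneous integrable 2-form of degree two on $\mathbb{C}^4$ with $d\eta=d(z_1z_2)\wedge dz_3\wedge dz_4$ (i.e. $d\eta=i_X\nu$ with $X=z_1\partial/\partial z_1-z_2\partial/\partial z_2$, $\nu=dz_1\wedge\cdots\wedge dz_4$). Then there exist linear forms $A(z_3,z_4),B(z_3,z_4)$, a constant $a\in\mathbb{C}$ and a homogeneous quadratic polynomial $q(z_3,z_4)$ such that $\eta=d(z_1z_2)\wedge\big(A(z_3,z_4)\,dz_3+B(z_3,z_4)\,dz_4\big)+\big(a\,z_1z_2+q(z_3,z_4)\big)\,dz_3\wedge dz_4$.
   Context: A form is homogeneous of degree $m$ if its coefficients are homogeneous polynomials of degree $m$. A holomorphic $q$-form $\eta$ is integrable if every point $p$ outside its zero set has a neighborhood $V$ with holomorphic 1-forms $\omega_1,\dots,\omega_q$ on $V$ such that $\eta|_V=\omega_1\wedge\cdots\wedge\omega_q$ and $d\omega_j\wedge\eta=0$ for all $j$. *)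

From Stdlib Require Import Reals.
Open Scope R_scope.

Definition CC : Type := (R * R)%type.
Definition C0 : CC := (0, 0).
Definition Cof (x : R) : CC := (x, 0).
Definition Cadd (z w : CC) : CC := (fst z + fst w, snd z + snd w).
Definition Copp (z : CC) : CC := (- fst z, - snd z).
Definition Csub (z w : CC) : CC := Cadd z (Copp w).
Definition Cmul (z w : CC) : CC :=
  (fst z * fst w - snd z * snd w, fst z * snd w + snd z * fst w).
Definition Cnorm (z : CC) : R := sqrt (fst z * fst z + snd z * snd z).

Inductive I4 : Type := i1 | i2 | i3 | i4.
Definition C4 : Type := I4 -> CC.

Definition sum4 (f : I4 -> CC) : CC :=
  Cadd (Cadd (Cadd (f i1) (f i2)) (f i3)) (f i4).
Definition p4add (p h : C4) : C4 := fun i => Cadd (p i) (h i).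
Definition p4sub (p h : C4) : C4 := fun i => Csub (p i) (h i).
Definition norm4 (h : C4) : R :=
  Cnorm (h i1) + Cnorm (h i2) + Cnorm (h i3) + Cnorm (h i4).
Definition tvec (i : I4) (t : CC) : C4 :=
  fun k => match i, k with
           | i1, i1 | i2, i2 | i3, i3 | i4, i4 => t
           | _, _ => C0 end.

Definition idx (i : I4) : nat :=
  match i with i1 => 1%nat | i2 => 2%nat | i3 => 3%nat | i4 => 4%nat end.
Definition ilt (i j : I4) : Prop := (idx i < idx j)%nat.

Definition is_open (V : C4 -> Prop) : Prop :=
  forall p, V p -> exists r, 0 < r /\ forall q, norm4 (p4sub q p) < r -> V q.

Definition holo_on (V : C4 -> Prop) (f : C4 -> CC) : Prop :=
  forall p, V p -> exists c : I4 -> CC,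
    forall eps, 0 < eps -> exists delta, 0 < delta /\
      forall h, norm4 h < delta ->
        Cnorm (Csub (Csub (f (p4add p h)) (f p)) (sum4 (fun i => Cmul (c i) (h i))))
          <= eps * norm4 h.

Definition pderiv (f : C4 -> CC) (i : I4) (p : C4) (c : CC) : Prop :=
  forall eps, 0 < eps -> exists delta, 0 < delta /\
    forall t, Cnorm t < delta ->
      Cnorm (Csub (Csub (f (p4add p (tvec i t))) (f p)) (Cmul c t)) <= eps * Cnorm t.

(** * Differential forms on CC^4 (pointwise coefficients)
    A 1-form is [w : I4 -> C4 -> CC], meaning  sum_i w i dz_i.
    A 2-form is [a : I4 -> I4 -> C4 -> CC], meaning  sum_{i<j} a i j dz_i /\ dz_j
    (only the entries with i < j are meaningful). *)

(** coefficient of dz_i /\ dz_j in (w1 /\ w2) *)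
Definition wedge11 (w1 w2 : I4 -> CC) (i j : I4) : CC :=
  Csub (Cmul (w1 i) (w2 j)) (Cmul (w1 j) (w2 i)).

(** coefficient of dz_i /\ dz_j in d w, where D i k = d(w_k)/d z_i *)
Definition dform1 (D : I4 -> I4 -> CC) (i j : I4) : CC := Csub (D i j) (D j i).

(** coefficient of dz_1/\dz_2/\dz_3/\dz_4 in a /\ b for 2-forms a, b *)
Definition wedge22 (a b : I4 -> I4 -> CC) : CC :=
  Cadd (Cadd (Cadd (Cadd (Cadd
    (Cmul (a i1 i2) (b i3 i4))
    (Copp (Cmul (a i1 i3) (b i2 i4))))
    (Cmul (a i1 i4) (b i2 i3)))
    (Cmul (a i2 i3) (b i1 i4)))
    (Copp (Cmul (a i2 i4) (b i1 i3))))
    (Cmul (a i3 i4) (b i1 i2)).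

(** coefficient of dz_i/\dz_j/\dz_k in d a, where D m i j = d(a_{ij})/d z_m *)
Definition dform2 (D : I4 -> I4 -> I4 -> CC) (i j k : I4) : CC :=
  Cadd (Csub (D i j k) (D j i k)) (D k i j).

Definition integrable2 (eta : I4 -> I4 -> C4 -> CC) : Prop :=
  forall p, (exists i j, ilt i j /\ eta i j p <> C0) ->
  exists V : C4 -> Prop, is_open V /\ V p /\
  exists w1 w2 : I4 -> C4 -> CC,
    (forall k, holo_on V (w1 k)) /\ (forall k, holo_on V (w2 k)) /\
    (forall q, V q -> forall i j, ilt i j ->
        eta i j q = wedge11 (fun k => w1 k q) (fun k => w2 k q) i j) /\
    exists D1 D2 : I4 -> I4 -> C4 -> CC,
      (forall q i k, V q -> pderiv (w1 k) i q (D1 i k q)) /\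
      (forall q i k, V q -> pderiv (w2 k) i q (D2 i k q)) /\
      (forall q, V q ->
         wedge22 (dform1 (fun i k => D1 i k q)) (fun i j => eta i j q) = C0 /\
         wedge22 (dform1 (fun i k => D2 i k q)) (fun i j => eta i j q) = C0).

Definition hom_quad (f : C4 -> CC) : Prop :=
  exists c : I4 -> I4 -> CC,
    forall z, f z = sum4 (fun k => sum4 (fun l => Cmul (c k l) (Cmul (z k) (z l)))).

(* Near a point where eta <> 0 write
   eta = w1 /\ w2 with d w_k /\ eta = 0; then (d eta) /\ w_k = -(d w_k /\ eta) = 0, and
   since d eta = i_X nu this says i_X w1 = i_X w2 = 0, hence i_X eta = 0, for
   X = z1 d/dz1 - z2 d/dz2.  These are polynomial identities holding off the zero set of a
   nonzero quadratic form, so they hold everywhere (restrict to real lines).  Comparing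
   coefficients, i_X eta = 0 gives eta12 = 0, eta13 = z2 A, eta23 = z1 A, eta14 = z2 B,
   eta24 = z1 B with A, B linear, and the equation for d eta removes z1, z2 from A and B
   and forces eta34 = a z1 z2 + q(z3, z4). *)

From Stdlib Require Import Reals Lra Lia Psatz Classical FunctionalExtensionality List.
From Coquelicot Require Complex.
Import ListNotations.
Open Scope R_scope.

Definition C1 : CC := (1, 0).

Lemma CC_ring : ring_theory C0 C1 Cadd Cmul Csub Copp eq.
Proof.
  constructor; intros; repeat match goal with x : CC |- _ => destruct x end;
  unfold C0, C1, Cadd, Cmul, Csub, Copp; simpl; try reflexivity; f_equal; ring.
Qed.
Add Ring CC_ring : CC_ring.

Lemma CC_eq (z w : CC) : fst z = fst w -> snd z = snd w -> z = w.
Proof. destruct z, w; simpl; intros -> ->; reflexivity. Qed.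

Lemma Csub_eq0 (z w : CC) : Csub z w = C0 -> z = w.
Proof. intro H. replace z with (Cadd (Csub z w) w) by ring. rewrite H. ring. Qed.

Lemma Cnorm_Cmod (z : CC) : Cnorm z = Complex.Cmod z.
Proof. unfold Cnorm, Complex.Cmod. f_equal. simpl. ring. Qed.

Lemma Cnorm_triangle (z w : CC) : Cnorm (Cadd z w) <= Cnorm z + Cnorm w.
Proof. rewrite !Cnorm_Cmod. exact (Complex.Cmod_triangle z w). Qed.

Lemma Cnorm_mul (z w : CC) : Cnorm (Cmul z w) = Cnorm z * Cnorm w.
Proof. rewrite !Cnorm_Cmod. exact (Complex.Cmod_mult z w). Qed.

Lemma Cnorm_ge0 (z : CC) : 0 <= Cnorm z.
Proof. rewrite Cnorm_Cmod. apply Complex.Cmod_ge_0. Qed.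

Lemma Cnorm_C0 : Cnorm C0 = 0.
Proof. rewrite Cnorm_Cmod. exact Complex.Cmod_0. Qed.

Lemma Cnorm_eq0 (z : CC) : Cnorm z = 0 -> z = C0.
Proof. rewrite Cnorm_Cmod. exact (Complex.Cmod_eq_0 z). Qed.

Lemma Cnorm_Cof (x : R) : Cnorm (Cof x) = Rabs x.
Proof. rewrite Cnorm_Cmod. exact (Complex.Cmod_R x). Qed.

Lemma Cnorm_sub (z w : CC) : Cnorm (Csub z w) <= Cnorm z + Cnorm w.
Proof.
  unfold Csub.
  replace (Cnorm w) with (Cnorm (Copp w)) by (rewrite !Cnorm_Cmod; apply Complex.Cmod_opp).
  apply Cnorm_triangle.
Qed.

Lemma Cmul_eq0_r (z w : CC) : Cmul z w = C0 -> z <> C0 -> w = C0.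
Proof.
  intros H Hz. apply Cnorm_eq0.
  assert (Hn : Cnorm z * Cnorm w = 0) by (rewrite <- Cnorm_mul, H; apply Cnorm_C0).
  destruct (Rmult_integral _ _ Hn) as [E|E]; [|exact E].
  exfalso. exact (Hz (Cnorm_eq0 z E)).
Qed.

Lemma norm4_tvec (p : C4) (m : I4) (t : CC) : norm4 (p4sub (p4add p (tvec m t)) p) = Cnorm t.
Proof.
  assert (E : forall a b, Csub (Cadd a b) a = b) by (intros; ring).
  unfold norm4, p4sub, p4add. rewrite !E.
  destruct m; simpl; rewrite Cnorm_C0; ring.
Qed.

Lemma pderiv_unique f i p c1 c2 : pderiv f i p c1 -> pderiv f i p c2 -> c1 = c2.
Proof.
  intros H1 H2. apply Csub_eq0.
  destruct (Req_dec (Cnorm (Csub c1 c2)) 0) as [E|E]; [exact (Cnorm_eq0 _ E)|].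
  set (d := Cnorm (Csub c1 c2)) in *.
  assert (Hd : 0 < d) by (pose proof (Cnorm_ge0 (Csub c1 c2)); unfold d in *; lra).
  destruct (H1 (d/4)) as [d1 [Hd1 K1]]; [lra|].
  destruct (H2 (d/4)) as [d2 [Hd2 K2]]; [lra|].
  set (r := Rmin d1 d2 / 2).
  assert (Hr : 0 < r) by (unfold r; apply Rmin_case; lra).
  assert (Hr1 : r < d1) by (unfold r; pose proof (Rmin_l d1 d2); lra).
  assert (Hr2 : r < d2) by (unfold r; pose proof (Rmin_r d1 d2); lra).
  assert (Ht : Cnorm (Cof r) = r) by (rewrite Cnorm_Cof; apply Rabs_pos_eq; lra).
  specialize (K1 (Cof r)). specialize (K2 (Cof r)). rewrite Ht in K1, K2.
  specialize (K1 Hr1). specialize (K2 Hr2).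
  set (D := Csub (f (p4add p (tvec i (Cof r)))) (f p)) in *.
  (* the two linear approximations at distance r differ by d r, yet each is within (d/4) r *)
  pose proof (Cnorm_sub (Csub D (Cmul c2 (Cof r))) (Csub D (Cmul c1 (Cof r)))) as Hsub.
  replace (Csub (Csub D (Cmul c2 (Cof r))) (Csub D (Cmul c1 (Cof r))))
    with (Cmul (Csub c1 c2) (Cof r)) in Hsub by ring.
  rewrite Cnorm_mul, Ht in Hsub. fold d in Hsub. nra.
Qed.

Lemma pderiv_local f g i p c r : 0 < r ->
  (forall t, Cnorm t < r -> f (p4add p (tvec i t)) = g (p4add p (tvec i t))) ->
  f p = g p -> pderiv g i p c -> pderiv f i p c.
Proof.
  intros Hr Hfg Hp H eps Heps. destruct (H eps Heps) as [d [Hd K]].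
  exists (Rmin d r). split; [apply Rmin_case; lra|].
  intros t Ht. pose proof (Rmin_l d r); pose proof (Rmin_r d r).
  rewrite Hfg, Hp; [apply K|]; lra.
Qed.

Lemma pderiv_of_increment f m p c r :
  (forall t, Csub (Csub (f (p4add p (tvec m t))) (f p)) (Cmul c t) = Cmul r (Cmul t t)) ->
  pderiv f m p c.
Proof.
  intros Hinc eps Heps. set (a := Cnorm r).
  assert (Ha : 0 <= a) by apply Cnorm_ge0.
  exists (eps / (a + 1)). split; [apply Rdiv_lt_0_compat; lra|].
  intros t Ht. rewrite Hinc, !Cnorm_mul. fold a.
  pose proof (Cnorm_ge0 t).
  assert (Cnorm t * (a + 1) < eps).
  { apply (Rmult_lt_compat_r (a+1)) in Ht; [|lra]. unfold Rdiv in Ht.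
    rewrite Rmult_assoc, Rinv_l in Ht by lra. lra. }
  nra.
Qed.

Lemma pderiv_sub f g i p a b : pderiv f i p a -> pderiv g i p b ->
  pderiv (fun q => Csub (f q) (g q)) i p (Csub a b).
Proof.
  intros Hf Hg eps Heps.
  destruct (Hf (eps/2)) as [d1 [Hd1 K1]]; [lra|].
  destruct (Hg (eps/2)) as [d2 [Hd2 K2]]; [lra|].
  exists (Rmin d1 d2). split; [apply Rmin_case; lra|].
  intros t Ht. specialize (K1 t ltac:(pose proof (Rmin_l d1 d2); lra)).
  specialize (K2 t ltac:(pose proof (Rmin_r d1 d2); lra)).
  set (x := f (p4add p (tvec i t))) in *. set (y := g (p4add p (tvec i t))) in *.
  replace (Csub (Csub (Csub x y) (Csub (f p) (g p))) (Cmul (Csub a b) t))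
    with (Csub (Csub (Csub x (f p)) (Cmul a t)) (Csub (Csub y (g p)) (Cmul b t))) by ring.
  eapply Rle_trans; [apply Cnorm_sub|]. lra.
Qed.

Lemma product_remainder_bound nf na nb ng nt nu nv e :
  0 <= nf -> 0 <= na -> 0 <= nb -> 0 <= ng -> 0 <= nt -> 0 <= nu -> 0 <= nv ->
  nt <= e -> e <= 1 -> nu <= e * nt -> nv <= e * nt ->
  nf * nv + na * nb * (nt * nt) + na * nt * nv + nu * (ng + nb * nt + nv)
    <= e * nt * (nf + na * nb + na + ng + nb + 1).
Proof.
  intros. assert (nt <= 1) by lra. assert (nv <= nt) by nra.
  assert (nf * nv <= nf * (e * nt)) by (apply Rmult_le_compat_l; lra).
  assert (na * nb * (nt * nt) <= na * nb * (e * nt)).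
  { apply Rmult_le_compat_l; [apply Rmult_le_pos; lra|]. apply Rmult_le_compat_r; lra. }
  assert (na * nt * nv <= na * (e * nt)).
  { rewrite Rmult_assoc. apply Rmult_le_compat_l; [lra|]. nra. }
  assert (nu * (ng + nb * nt + nv) <= e * nt * (ng + nb + 1)) by
    (apply Rmult_le_compat; nra).
  nra.
Qed.

Lemma Cnorm_product_remainder (f a b g t u v : CC) :
  Cnorm (Cadd (Cadd (Cadd (Cmul f v) (Cmul (Cmul a b) (Cmul t t))) (Cmul (Cmul a t) v))
              (Cmul u (Cadd (Cadd g (Cmul b t)) v)))
  <= Cnorm f * Cnorm v + Cnorm a * Cnorm b * (Cnorm t * Cnorm t) + Cnorm a * Cnorm t * Cnorm v
     + Cnorm u * (Cnorm g + Cnorm b * Cnorm t + Cnorm v).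
Proof.
  pose proof (Cnorm_triangle (Cadd (Cadd (Cmul f v) (Cmul (Cmul a b) (Cmul t t)))
                                     (Cmul (Cmul a t) v))
                             (Cmul u (Cadd (Cadd g (Cmul b t)) v))).
  pose proof (Cnorm_triangle (Cadd (Cmul f v) (Cmul (Cmul a b) (Cmul t t)))
                             (Cmul (Cmul a t) v)).
  pose proof (Cnorm_triangle (Cmul f v) (Cmul (Cmul a b) (Cmul t t))).
  pose proof (Cnorm_triangle (Cadd g (Cmul b t)) v).
  pose proof (Cnorm_triangle g (Cmul b t)).
  rewrite !Cnorm_mul in *.
  assert (Cnorm u * Cnorm (Cadd (Cadd g (Cmul b t)) v)
          <= Cnorm u * (Cnorm g + Cnorm b * Cnorm t + Cnorm v))
    by (apply Rmult_le_compat_l; [apply Cnorm_ge0 | lra]).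
  lra.
Qed.

Lemma pderiv_mul f g i p a b : pderiv f i p a -> pderiv g i p b ->
  pderiv (fun q => Cmul (f q) (g q)) i p (Cadd (Cmul a (g p)) (Cmul (f p) b)).
Proof.
  intros Hf Hg eps Heps.
  set (K := Cnorm (f p) + Cnorm a * Cnorm b + Cnorm a + Cnorm (g p) + Cnorm b + 1).
  pose proof (Cnorm_ge0 (f p)); pose proof (Cnorm_ge0 a); pose proof (Cnorm_ge0 b);
  pose proof (Cnorm_ge0 (g p)).
  assert (HK : 1 <= K) by (unfold K; nra).
  set (e := Rmin 1 (eps / K)).
  assert (He : 0 < e) by (apply Rmin_glb_lt; [lra|]; apply Rdiv_lt_0_compat; lra).
  assert (He1 : e <= 1) by apply Rmin_l.
  assert (HeK : e * K <= eps).
  { assert (Hr : e <= eps / K) by apply Rmin_r.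
    apply (Rmult_le_compat_r K) in Hr; [|lra]. unfold Rdiv in Hr.
    rewrite Rmult_assoc, Rinv_l in Hr by lra. lra. }
  destruct (Hf e He) as [d1 [Hd1 K1]]. destruct (Hg e He) as [d2 [Hd2 K2]].
  exists (Rmin e (Rmin d1 d2)). split; [apply Rmin_glb_lt; [lra|apply Rmin_glb_lt; lra]|].
  intros t Ht.
  pose proof (Rmin_l e (Rmin d1 d2)); pose proof (Rmin_r e (Rmin d1 d2));
  pose proof (Rmin_l d1 d2); pose proof (Rmin_r d1 d2).
  specialize (K1 t ltac:(lra)). specialize (K2 t ltac:(lra)).
  set (u := Csub (Csub (f (p4add p (tvec i t))) (f p)) (Cmul a t)) in *.
  set (v := Csub (Csub (g (p4add p (tvec i t))) (g p)) (Cmul b t)) in *.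
  (* with f(p+t) = f p + a t + u and g(p+t) = g p + b t + v *)
  replace (Csub (Csub (Cmul (f (p4add p (tvec i t))) (g (p4add p (tvec i t))))
                      (Cmul (f p) (g p))) (Cmul (Cadd (Cmul a (g p)) (Cmul (f p) b)) t))
   with (Cadd (Cadd (Cadd (Cmul (f p) v) (Cmul (Cmul a b) (Cmul t t))) (Cmul (Cmul a t) v))
          (Cmul u (Cadd (Cadd (g p) (Cmul b t)) v)))
   by (unfold u, v; ring).
  pose proof (Cnorm_ge0 t); pose proof (Cnorm_ge0 u); pose proof (Cnorm_ge0 v).
  pose proof (Cnorm_product_remainder (f p) a b (g p) t u v).
  pose proof (product_remainder_bound (Cnorm (f p)) (Cnorm a) (Cnorm b) (Cnorm (g p))
                (Cnorm t) (Cnorm u) (Cnorm v) e).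
  assert (e * K * Cnorm t <= eps * Cnorm t) by (apply Rmult_le_compat_r; lra).
  unfold K in *. lra.
Qed.

Lemma real_quintic_eq0 a0 a1 a2 a3 a4 a5 :
  (forall t, a0 + a1*t + a2*(t*t) + a3*(t*t*t) + a4*(t*t*t*t) + a5*(t*t*t*t*t) = 0) ->
  a0 = 0 /\ a1 = 0 /\ a2 = 0 /\ a3 = 0 /\ a4 = 0 /\ a5 = 0.
Proof.
  intro H. pose proof (H 0). pose proof (H 1). pose proof (H 2). pose proof (H 3).
  pose proof (H 4). pose proof (H 5). lra.
Qed.

Definition quintic (k0 k1 k2 k3 k4 k5 T : CC) : CC :=
  Cadd (Cadd (Cadd (Cadd (Cadd k0 (Cmul k1 T)) (Cmul k2 (Cmul T T)))
    (Cmul k3 (Cmul T (Cmul T T)))) (Cmul k4 (Cmul T (Cmul T (Cmul T T)))))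
    (Cmul k5 (Cmul T (Cmul T (Cmul T (Cmul T T))))).

Lemma quintic_eq0 k0 k1 k2 k3 k4 k5 : (forall t, quintic k0 k1 k2 k3 k4 k5 (Cof t) = C0) ->
  k0 = C0 /\ k1 = C0 /\ k2 = C0 /\ k3 = C0 /\ k4 = C0 /\ k5 = C0.
Proof.
  intro H.
  destruct k0 as [x0 y0], k1 as [x1 y1], k2 as [x2 y2], k3 as [x3 y3], k4 as [x4 y4],
    k5 as [x5 y5].
  assert (A : forall t,
    x0 + x1*t + x2*(t*t) + x3*(t*t*t) + x4*(t*t*t*t) + x5*(t*t*t*t*t) = 0 /\
    y0 + y1*t + y2*(t*t) + y3*(t*t*t) + y4*(t*t*t*t) + y5*(t*t*t*t*t) = 0).
  { intro t. specialize (H t). unfold quintic, Cof, Cmul, Cadd, C0 in H. simpl in H.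
    injection H as H1 H2. split; [rewrite <- H1 | rewrite <- H2]; ring. }
  destruct (real_quintic_eq0 x0 x1 x2 x3 x4 x5) as (?&?&?&?&?&?); [apply A|].
  destruct (real_quintic_eq0 y0 y1 y2 y3 y4 y5) as (?&?&?&?&?&?); [apply A|].
  subst. repeat split.
Qed.

Definition cubic (f0 f1 f2 f3 T : CC) : CC :=
  Cadd (Cadd (Cadd f0 (Cmul f1 T)) (Cmul f2 (Cmul T T))) (Cmul f3 (Cmul T (Cmul T T))).

(* The product of the cubic and the quadratic vanishes identically on the real line. *)
Lemma cubic_eq0_off_quadratic f0 f1 f2 f3 g0 g1 g2 : g2 <> C0 ->
  (forall t, cubic g0 g1 g2 C0 (Cof t) <> C0 -> cubic f0 f1 f2 f3 (Cof t) = C0) -> f0 = C0.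
Proof.
  intros Hg H.
  assert (K : forall t, quintic (Cmul f0 g0) (Cadd (Cmul f0 g1) (Cmul f1 g0))
     (Cadd (Cadd (Cmul f0 g2) (Cmul f1 g1)) (Cmul f2 g0))
     (Cadd (Cadd (Cmul f1 g2) (Cmul f2 g1)) (Cmul f3 g0))
     (Cadd (Cmul f2 g2) (Cmul f3 g1)) (Cmul f3 g2) (Cof t) = C0).
  { intro t. transitivity (Cmul (cubic f0 f1 f2 f3 (Cof t)) (cubic g0 g1 g2 C0 (Cof t))).
    - unfold quintic, cubic; ring.
    - destruct (classic (cubic g0 g1 g2 C0 (Cof t) = C0)) as [E|E].
      + rewrite E; ring.
      + rewrite (H t E); ring. }
  apply quintic_eq0 in K. destruct K as (_ & _ & K2 & K3 & K4 & K5).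
  assert (E3 : f3 = C0) by (apply (Cmul_eq0_r g2); [rewrite <- K5; ring | exact Hg]).
  subst f3.
  assert (E2 : f2 = C0) by (apply (Cmul_eq0_r g2); [rewrite <- K4; ring | exact Hg]).
  subst f2.
  assert (E1 : f1 = C0) by (apply (Cmul_eq0_r g2); [rewrite <- K3; ring | exact Hg]).
  subst f1.
  apply (Cmul_eq0_r g2); [rewrite <- K2; ring | exact Hg].
Qed.

Definition line (z v : C4) (t : R) : C4 := fun i => Cadd (z i) (Cmul (Cof t) (v i)).

Definition cubic_on_lines (F : C4 -> CC) : Prop :=
  forall z v, exists f1 f2 f3, forall t, F (line z v t) = cubic (F z) f1 f2 f3 (Cof t).

Record qform := Mkqform { q11 : CC; q12 : CC; q13 : CC; q14 : CC; q22 : CC; q23 : CC;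
  q24 : CC; q33 : CC; q34 : CC; q44 : CC }.

Definition qeval (s : qform) (z : C4) : CC :=
  Cadd (Cadd (Cadd (Cadd (Cadd (Cadd (Cadd (Cadd (Cadd
   (Cmul (q11 s) (Cmul (z i1) (z i1))) (Cmul (q12 s) (Cmul (z i1) (z i2))))
   (Cmul (q13 s) (Cmul (z i1) (z i3)))) (Cmul (q14 s) (Cmul (z i1) (z i4))))
   (Cmul (q22 s) (Cmul (z i2) (z i2)))) (Cmul (q23 s) (Cmul (z i2) (z i3))))
   (Cmul (q24 s) (Cmul (z i2) (z i4)))) (Cmul (q33 s) (Cmul (z i3) (z i3))))
   (Cmul (q34 s) (Cmul (z i3) (z i4)))) (Cmul (q44 s) (Cmul (z i4) (z i4))).

Definition dbl (a : CC) : CC := Cadd a a.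

Definition qderiv (s : qform) (m : I4) (z : C4) : CC :=
  match m with
  | i1 => Cadd (Cadd (Cadd (Cmul (dbl (q11 s)) (z i1)) (Cmul (q12 s) (z i2)))
            (Cmul (q13 s) (z i3))) (Cmul (q14 s) (z i4))
  | i2 => Cadd (Cadd (Cadd (Cmul (q12 s) (z i1)) (Cmul (dbl (q22 s)) (z i2)))
            (Cmul (q23 s) (z i3))) (Cmul (q24 s) (z i4))
  | i3 => Cadd (Cadd (Cadd (Cmul (q13 s) (z i1)) (Cmul (q23 s) (z i2)))
            (Cmul (dbl (q33 s)) (z i3))) (Cmul (q34 s) (z i4))
  | i4 => Cadd (Cadd (Cadd (Cmul (q14 s) (z i1)) (Cmul (q24 s) (z i2)))
            (Cmul (q34 s) (z i3))) (Cmul (dbl (q44 s)) (z i4))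
  end.

Definition qdiag (s : qform) (m : I4) : CC :=
  match m with i1 => q11 s | i2 => q22 s | i3 => q33 s | i4 => q44 s end.

Definition qpolar (s : qform) (z v : C4) : CC := sum4 (fun m => Cmul (qderiv s m z) (v m)).

Definition qzero : qform := Mkqform C0 C0 C0 C0 C0 C0 C0 C0 C0 C0.

Lemma qeval_qzero z : qeval qzero z = C0.
Proof. unfold qeval, qzero; cbn [q11 q12 q13 q14 q22 q23 q24 q33 q34 q44]; ring. Qed.

Lemma qderiv_qzero m z : qderiv qzero m z = C0.
Proof.
  unfold qderiv, qzero, dbl; destruct m; cbn [q11 q12 q13 q14 q22 q23 q24 q33 q34 q44]; ring.
Qed.

Lemma hom_quad_qform f : hom_quad f -> exists s, forall z, f z = qeval s z.
Proof.
  intros [c Hc].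
  exists (Mkqform (c i1 i1) (Cadd (c i1 i2) (c i2 i1)) (Cadd (c i1 i3) (c i3 i1))
    (Cadd (c i1 i4) (c i4 i1)) (c i2 i2) (Cadd (c i2 i3) (c i3 i2))
    (Cadd (c i2 i4) (c i4 i2)) (c i3 i3) (Cadd (c i3 i4) (c i4 i3)) (c i4 i4)).
  intro z. rewrite Hc. unfold qeval, sum4; simpl. ring.
Qed.

Lemma pderiv_qeval s m p : pderiv (qeval s) m p (qderiv s m p).
Proof.
  apply (pderiv_of_increment _ _ _ _ (qdiag s m)). intro t.
  destruct m; unfold qeval, qderiv, dbl, p4add, tvec, qdiag; simpl; ring.
Qed.

Lemma qeval_line s z v t :
  qeval s (line z v t) = cubic (qeval s z) (qpolar s z v) (qeval s v) C0 (Cof t).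
Proof. unfold qeval, qpolar, sum4, qderiv, dbl, line, cubic; simpl. ring. Qed.

Lemma qeval_cubic_on_lines s : cubic_on_lines (qeval s).
Proof. intros z v. do 3 eexists. intro t. apply qeval_line. Qed.

(* Restrict to the line from z in a direction where the form is nonzero. *)
Lemma vanishing_off_quadric (F : C4 -> CC) (s : qform) :
  (exists v, qeval s v <> C0) -> cubic_on_lines F ->
  (forall y, qeval s y <> C0 -> F y = C0) -> forall z, F z = C0.
Proof.
  intros [v Hv] HF H z. destruct (HF z v) as (f1 & f2 & f3 & Hf).
  apply (cubic_eq0_off_quadratic (F z) f1 f2 f3 (qeval s z) (qpolar s z v) (qeval s v) Hv).
  intros t Ht. rewrite <- Hf. apply H. rewrite qeval_line. exact Ht.
Qed.

Definition qcross (s s' : qform) (z : C4) : CC :=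
  Csub (Cmul (z i1) (qeval s z)) (Cmul (z i2) (qeval s' z)).

Lemma qcross_cubic_on_lines s s' : cubic_on_lines (qcross s s').
Proof.
  intros z v.
  exists (Csub (Cadd (Cmul (z i1) (qpolar s z v)) (Cmul (v i1) (qeval s z)))
               (Cadd (Cmul (z i2) (qpolar s' z v)) (Cmul (v i2) (qeval s' z)))),
         (Csub (Cadd (Cmul (z i1) (qeval s v)) (Cmul (v i1) (qpolar s z v)))
               (Cadd (Cmul (z i2) (qeval s' v)) (Cmul (v i2) (qpolar s' z v)))),
         (Csub (Cmul (v i1) (qeval s v)) (Cmul (v i2) (qeval s' v))).
  intro t. unfold qcross. rewrite !qeval_line. unfold line, cubic. ring.
Qed.

Definition pt (a b c d : R) : C4 :=
  fun k => match k with i1 => Cof a | i2 => Cof b | i3 => Cof c | i4 => Cof d end.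

(* The forms z1 (a1 z1 + ... + a4 z4) and z2 (a1 z1 + ... + a4 z4). *)
Definition qmul_z1 (a : I4 -> CC) : qform :=
  Mkqform (a i1) (a i2) (a i3) (a i4) C0 C0 C0 C0 C0 C0.
Definition qmul_z2 (a : I4 -> CC) : qform :=
  Mkqform C0 (a i1) C0 C0 (a i2) (a i3) (a i4) C0 C0 C0.

(* Specialise a polynomial identity [H : forall z, _ = _] at the real points [ps] and split
   each instance into real and imaginary parts, for [lra] to compare coefficients. *)
Ltac eval_at H ps :=
  lazymatch ps with
  | (?p :: ?ps')%list =>
      let E1 := fresh "Hev" in let E2 := fresh "Hev" in
      pose proof (f_equal fst (H p)) as E1; pose proof (f_equal snd (H p)) as E2;
      cbn [fst snd qeval qderiv dbl qmul_z1 qmul_z2 qzero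
           q11 q12 q13 q14 q22 q23 q24 q33 q34 q44 pt Cof Cmul Cadd Csub Copp C0 C1] in E1, E2;
      eval_at H ps'
  | nil => idtac
  end.

Definition unit_points : list C4 :=
  [pt 1 0 0 0; pt 0 1 0 0; pt 0 0 1 0; pt 0 0 0 1].

(* Unisolvent for cubic forms in four variables. *)
Definition cubic_points : list C4 :=
  [pt 1 0 0 0; pt 0 1 0 0; pt 0 0 1 0; pt 0 0 0 1;
   pt 1 1 0 0; pt 1 (-1) 0 0; pt 1 0 1 0; pt 1 0 (-1) 0; pt 1 0 0 1; pt 1 0 0 (-1);
   pt 0 1 1 0; pt 0 1 (-1) 0; pt 0 1 0 1; pt 0 1 0 (-1); pt 0 0 1 1; pt 0 0 1 (-1);
   pt 1 1 1 0; pt 1 1 0 1; pt 1 0 1 1; pt 0 1 1 1].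

Lemma qform_cross_factor s s' :
  (forall z, Cmul (z i1) (qeval s z) = Cmul (z i2) (qeval s' z)) ->
  exists a, s = qmul_z2 a /\ s' = qmul_z1 a.
Proof.
  destruct s as [x11 x12 x13 x14 x22 x23 x24 x33 x34 x44],
    s' as [y11 y12 y13 y14 y22 y23 y24 y33 y34 y44].
  intro H. let ps := eval unfold cubic_points in cubic_points in eval_at H ps.
  exists (fun k => match k with i1 => y11 | i2 => y12 | i3 => y13 | i4 => y14 end).
  unfold qmul_z1, qmul_z2. split; f_equal; apply CC_eq; cbn [fst snd C0]; lra.
Qed.

Lemma qform_z1_mul_eq0 s : (forall z, Cmul (z i1) (qeval s z) = C0) -> s = qzero.
Proof.
  intro H. destruct (qform_cross_factor s qzero) as [a [-> Ha]].
  - intro z. rewrite H, qeval_qzero. ring.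
  - unfold qmul_z1, qmul_z2, qzero in *. injection Ha as <- <- <- <-. reflexivity.
Qed.

Lemma qmul_closed a :
  (forall z, Csub (qderiv (qmul_z1 a) i1 z) (qderiv (qmul_z2 a) i2 z) = C0) ->
  a i1 = C0 /\ a i2 = C0.
Proof.
  intro H. let ps := eval unfold unit_points in unit_points in eval_at H ps.
  split; apply CC_eq; cbn [fst snd C0]; lra.
Qed.

Lemma qform_34_shape s a b :
  (forall z, Cadd (Csub (qderiv s i1 z) (qderiv (qmul_z2 b) i3 z)) (qderiv (qmul_z2 a) i4 z)
             = z i2) ->
  (forall z, Cadd (Csub (qderiv s i2 z) (qderiv (qmul_z1 b) i3 z)) (qderiv (qmul_z1 a) i4 z)
             = z i1) ->
  forall z, qeval s z =
    Cadd (Cmul (Cadd C1 (Csub (b i3) (a i4))) (Cmul (z i1) (z i2)))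
      (Cadd (Cadd (Cmul (q33 s) (Cmul (z i3) (z i3))) (Cmul (q34 s) (Cmul (z i3) (z i4))))
            (Cmul (q44 s) (Cmul (z i4) (z i4)))).
Proof.
  destruct s as [x11 x12 x13 x14 x22 x23 x24 x33 x34 x44]. intros H1 H2.
  let ps := eval unfold unit_points in unit_points in eval_at H1 ps; eval_at H2 ps.
  assert (Hc : x11 = C0 /\ x12 = Cadd C1 (Csub (b i3) (a i4)) /\ x13 = C0 /\ x14 = C0 /\
              x22 = C0 /\ x23 = C0 /\ x24 = C0)
    by (repeat split; apply CC_eq; cbn [fst snd C0 C1 Cadd Csub Copp]; lra).
  destruct Hc as (-> & -> & -> & -> & -> & -> & ->).
  intro z. unfold qeval. cbn [q11 q12 q13 q14 q22 q23 q24 q33 q34 q44]. ring.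
Qed.

Lemma qform_system_solution (s12 s13 s14 s23 s24 s34 : qform) :
  (forall z, Cmul (z i1) (qeval s12 z) = C0) ->
  (forall z, Cmul (z i1) (qeval s13 z) = Cmul (z i2) (qeval s23 z)) ->
  (forall z, Cmul (z i1) (qeval s14 z) = Cmul (z i2) (qeval s24 z)) ->
  (forall z, Cadd (Csub (qderiv s23 i1 z) (qderiv s13 i2 z)) (qderiv s12 i3 z) = C0) ->
  (forall z, Cadd (Csub (qderiv s24 i1 z) (qderiv s14 i2 z)) (qderiv s12 i4 z) = C0) ->
  (forall z, Cadd (Csub (qderiv s34 i1 z) (qderiv s14 i3 z)) (qderiv s13 i4 z) = z i2) ->
  (forall z, Cadd (Csub (qderiv s34 i2 z) (qderiv s24 i3 z)) (qderiv s23 i4 z) = z i1) ->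
  exists (a3 a4 b3 b4 a q33 q34 q44 : CC),
    forall z,
      let A := Cadd (Cmul a3 (z i3)) (Cmul a4 (z i4)) in
      let B := Cadd (Cmul b3 (z i3)) (Cmul b4 (z i4)) in
      let q := Cadd (Cadd (Cmul q33 (Cmul (z i3) (z i3)))
                          (Cmul q34 (Cmul (z i3) (z i4))))
                    (Cmul q44 (Cmul (z i4) (z i4))) in
      qeval s12 z = C0 /\
      qeval s13 z = Cmul (z i2) A /\
      qeval s14 z = Cmul (z i2) B /\
      qeval s23 z = Cmul (z i1) A /\
      qeval s24 z = Cmul (z i1) B /\
      qeval s34 z = Cadd (Cmul a (Cmul (z i1) (z i2))) q.
Proof.
  intros G12 G13 G14 K123 K124 K134 K234.
  rewrite (qform_z1_mul_eq0 s12 G12) in *.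
  destruct (qform_cross_factor s13 s23 G13) as [a [-> ->]].
  destruct (qform_cross_factor s14 s24 G14) as [b [-> ->]].
  destruct (qmul_closed a) as [Ha1 Ha2].
  { intro z. rewrite <- (K123 z), qderiv_qzero. ring. }
  destruct (qmul_closed b) as [Hb1 Hb2].
  { intro z. rewrite <- (K124 z), qderiv_qzero. ring. }
  pose proof (qform_34_shape s34 a b K134 K234) as E34.
  exists (a i3), (a i4), (b i3), (b i4), (Cadd C1 (Csub (b i3) (a i4))),
    (q33 s34), (q34 s34), (q44 s34).
  intro z. cbv zeta. rewrite E34, qeval_qzero.
  unfold qeval, qmul_z1, qmul_z2. cbn [q11 q12 q13 q14 q22 q23 q24 q33 q34 q44].
  rewrite Ha1, Ha2, Hb1, Hb2. repeat split; ring.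
Qed.

Local Hint Extern 1 (ilt _ _) => (unfold ilt; simpl; lia) : core.

(* Product rule: the dz_m-derivative of (a /\ b)_ij when A m k, B m k are those of a_k, b_k. *)
Definition dwedge11 (a b : I4 -> CC) (A B : I4 -> I4 -> CC) (m i j : I4) : CC :=
  Csub (Cadd (Cmul (A m i) (b j)) (Cmul (a i) (B m j)))
       (Cadd (Cmul (A m j) (b i)) (Cmul (a j) (B m i))).

(* Coefficient of dz1 /\ dz2 /\ dz3 /\ dz4 in T /\ a, for a 3-form T and a 1-form a. *)
Definition wedge31 (T : I4 -> I4 -> I4 -> CC) (a : I4 -> CC) : CC :=
  Cadd (Cadd (Cadd (Cmul (T i1 i2 i3) (a i4)) (Copp (Cmul (T i1 i2 i4) (a i3))))
    (Cmul (T i1 i3 i4) (a i2))) (Copp (Cmul (T i2 i3 i4) (a i1))).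

Lemma wedge31_dwedge11_l a b A B :
  wedge31 (dform2 (dwedge11 a b A B)) a = Copp (wedge22 (dform1 A) (wedge11 a b)).
Proof. unfold wedge31, dform2, dwedge11, wedge22, dform1, wedge11. ring. Qed.

Lemma wedge31_dwedge11_r a b A B :
  wedge31 (dform2 (dwedge11 a b A B)) b = Copp (wedge22 (dform1 B) (wedge11 a b)).
Proof. unfold wedge31, dform2, dwedge11, wedge22, dform1, wedge11. ring. Qed.

Lemma wedge11_contraction x1 x2 a b :
  Cmul x1 (a i1) = Cmul x2 (a i2) -> Cmul x1 (b i1) = Cmul x2 (b i2) ->
  forall j, Cmul x1 (wedge11 a b i1 j) = Cmul x2 (wedge11 a b i2 j).
Proof.
  intros Ha Hb j. unfold wedge11.
  replace (Cmul x1 (Csub (Cmul (a i1) (b j)) (Cmul (a j) (b i1))))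
    with (Csub (Cmul (Cmul x1 (a i1)) (b j)) (Cmul (a j) (Cmul x1 (b i1)))) by ring.
  rewrite Ha, Hb. ring.
Qed.

Section IntegrableForm.

Variable eta : I4 -> I4 -> C4 -> CC.
Variable D : I4 -> I4 -> I4 -> C4 -> CC.
Hypothesis eta_deriv : forall m i j z, pderiv (eta i j) m z (D m i j z).
Hypothesis d_eta : forall z,
  dform2 (fun m i j => D m i j z) i1 i2 i3 = C0 /\
  dform2 (fun m i j => D m i j z) i1 i2 i4 = C0 /\
  dform2 (fun m i j => D m i j z) i1 i3 i4 = z i2 /\
  dform2 (fun m i j => D m i j z) i2 i3 i4 = z i1.
Hypothesis eta_integrable : integrable2 eta.
Hypothesis eta_quad : forall i j, ilt i j -> hom_quad (eta i j).

Lemma D_qderiv i j s (E : forall z, eta i j z = qeval s z) m z : D m i j z = qderiv s m z.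
Proof.
  apply (pderiv_unique (eta i j) m z); [apply eta_deriv|].
  replace (eta i j) with (qeval s) by (extensionality w; symmetry; apply E).
  apply pderiv_qeval.
Qed.

Lemma eta_not_identically_zero : exists i j, ilt i j /\ exists v, eta i j v <> C0.
Proof.
  apply NNPP; intro N.
  assert (Z : forall i j v, ilt i j -> eta i j v = C0).
  { intros i j v Hij. apply NNPP; intro Hv. apply N. exists i, j. split; [exact Hij|].
    exists v; exact Hv. }
  assert (DZ : forall m i j z, ilt i j -> D m i j z = C0).
  { intros m i j z Hij. apply (pderiv_unique (eta i j) m z); [apply eta_deriv|].
    apply (pderiv_of_increment _ _ _ _ C0). intro t. rewrite !Z by exact Hij. ring. }
  destruct (d_eta (tvec i2 C1)) as (_ & _ & H & _). unfold dform2 in H.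
  rewrite !DZ in H by auto. simpl in H. injection H. lra.
Qed.

Lemma contraction_at p : (exists i j, ilt i j /\ eta i j p <> C0) ->
  Cmul (p i1) (eta i1 i2 p) = C0 /\
  Cmul (p i1) (eta i1 i3 p) = Cmul (p i2) (eta i2 i3 p) /\
  Cmul (p i1) (eta i1 i4 p) = Cmul (p i2) (eta i2 i4 p).
Proof.
  intro Hnz.
  destruct (eta_integrable p Hnz)
    as (V & Vopen & Vp & w1 & w2 & _ & _ & Hwedge & D1 & D2 & HD1 & HD2 & Hclosed).
  set (a := fun k => w1 k p). set (b := fun k => w2 k p).
  set (A := fun m k => D1 m k p). set (B := fun m k => D2 m k p).
  assert (Heta : forall i j, ilt i j -> eta i j p = wedge11 a b i j)
    by (intros; apply Hwedge; assumption).
  assert (Hprod : forall m i j, ilt i j -> D m i j p = dwedge11 a b A B m i j).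
  { intros m i j Hij. destruct (Vopen p Vp) as [r [Hr Hball]].
    apply (pderiv_unique (eta i j) m p); [apply eta_deriv|].
    apply (pderiv_local _ (fun q => wedge11 (fun k => w1 k q) (fun k => w2 k q) i j) m p _ r Hr).
    - intros t Ht. apply Hwedge; [apply Hball; rewrite norm4_tvec; exact Ht | exact Hij].
    - apply Heta, Hij.
    - apply pderiv_sub; apply pderiv_mul; auto. }
  assert (Hd3 : forall i j k, ilt i j -> ilt i k -> ilt j k ->
      dform2 (fun m i j => D m i j p) i j k = dform2 (dwedge11 a b A B) i j k)
    by (intros; unfold dform2; rewrite !Hprod by assumption; reflexivity).
  assert (Hw22 : forall X, wedge22 X (fun i j => eta i j p) = wedge22 X (wedge11 a b))
    by (intro X; unfold wedge22; rewrite !Heta by auto; reflexivity).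
  destruct (Hclosed p Vp) as [W1 W2]. rewrite Hw22 in W1, W2. fold A in W1. fold B in W2.
  (* d eta = i_X nu, so (d eta) /\ c = (X . c) nu with X = z1 d/dz1 - z2 d/dz2 *)
  assert (HX : forall c, wedge31 (dform2 (dwedge11 a b A B)) c = C0 ->
                         Cmul (p i1) (c i1) = Cmul (p i2) (c i2)).
  { intros c Hc. destruct (d_eta p) as (T123 & T124 & T134 & T234).
    unfold wedge31 in Hc. rewrite <- !Hd3, T123, T124, T134, T234 in Hc by auto.
    apply Csub_eq0. match type of Hc with ?L = _ => transitivity (Copp L) end; [ring|].
    rewrite Hc. ring. }
  assert (Ha := HX a ltac:(rewrite wedge31_dwedge11_l, W1; ring)).
  assert (Hb := HX b ltac:(rewrite wedge31_dwedge11_r, W2; ring)).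
  rewrite !Heta by auto. rewrite !(wedge11_contraction _ _ _ _ Ha Hb).
  split; [unfold wedge11; ring | split; reflexivity].
Qed.

Lemma vanishing_off_zero_set (F : C4 -> CC) : cubic_on_lines F ->
  (forall y, (exists i j, ilt i j /\ eta i j y <> C0) -> F y = C0) -> forall z, F z = C0.
Proof.
  intros HF H. destruct eta_not_identically_zero as (i & j & Hij & v & Hv).
  destruct (hom_quad_qform _ (eta_quad i j Hij)) as [s E].
  apply (vanishing_off_quadric F s); [exists v; rewrite <- E; exact Hv | exact HF |].
  intros y Hy. apply H. exists i, j. rewrite E. split; assumption.
Qed.

Lemma contraction_identities s12 s13 s14 s23 s24
  (E12 : forall z, eta i1 i2 z = qeval s12 z) (E13 : forall z, eta i1 i3 z = qeval s13 z)
  (E14 : forall z, eta i1 i4 z = qeval s14 z) (E23 : forall z, eta i2 i3 z = qeval s23 z)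
  (E24 : forall z, eta i2 i4 z = qeval s24 z) :
  (forall z, Cmul (z i1) (qeval s12 z) = C0) /\
  (forall z, Cmul (z i1) (qeval s13 z) = Cmul (z i2) (qeval s23 z)) /\
  (forall z, Cmul (z i1) (qeval s14 z) = Cmul (z i2) (qeval s24 z)).
Proof.
  assert (Hext : forall s s',
      (forall y, (exists i j, ilt i j /\ eta i j y <> C0) ->
                 Cmul (y i1) (qeval s y) = Cmul (y i2) (qeval s' y)) ->
      forall z, Cmul (z i1) (qeval s z) = Cmul (z i2) (qeval s' z)).
  { intros s s' H z. apply Csub_eq0. revert z.
    apply (vanishing_off_zero_set (qcross s s')); [apply qcross_cubic_on_lines|].
    intros y Hy. unfold qcross. rewrite (H y Hy). ring. }
  split; [|split]; intro z.
  - transitivity (Cmul (z i2) (qeval qzero z)); [|rewrite qeval_qzero; ring].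
    revert z. apply Hext. intros y Hy.
    rewrite <- E12, qeval_qzero, (proj1 (contraction_at y Hy)). ring.
  - revert z. apply Hext. intros y Hy. rewrite <- E13, <- E23. apply contraction_at, Hy.
  - revert z. apply Hext. intros y Hy. rewrite <- E14, <- E24. apply contraction_at, Hy.
Qed.

Lemma closedness_identities s12 s13 s14 s23 s24 s34
  (E12 : forall z, eta i1 i2 z = qeval s12 z) (E13 : forall z, eta i1 i3 z = qeval s13 z)
  (E14 : forall z, eta i1 i4 z = qeval s14 z) (E23 : forall z, eta i2 i3 z = qeval s23 z)
  (E24 : forall z, eta i2 i4 z = qeval s24 z) (E34 : forall z, eta i3 i4 z = qeval s34 z) :
  (forall z, Cadd (Csub (qderiv s23 i1 z) (qderiv s13 i2 z)) (qderiv s12 i3 z) = C0) /\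
  (forall z, Cadd (Csub (qderiv s24 i1 z) (qderiv s14 i2 z)) (qderiv s12 i4 z) = C0) /\
  (forall z, Cadd (Csub (qderiv s34 i1 z) (qderiv s14 i3 z)) (qderiv s13 i4 z) = z i2) /\
  (forall z, Cadd (Csub (qderiv s34 i2 z) (qderiv s24 i3 z)) (qderiv s23 i4 z) = z i1).
Proof.
  repeat split; intro z; destruct (d_eta z) as (H123 & H124 & H134 & H234);
    unfold dform2 in *;
    rewrite ?(D_qderiv _ _ _ E12), ?(D_qderiv _ _ _ E13), ?(D_qderiv _ _ _ E14),
      ?(D_qderiv _ _ _ E23), ?(D_qderiv _ _ _ E24), ?(D_qderiv _ _ _ E34) in *;
    assumption.
Qed.

End IntegrableForm.

Theorem mainTheorem18 (eta : I4 -> I4 -> C4 -> CC) :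
  (forall i j, ilt i j -> hom_quad (eta i j)) ->
  integrable2 eta ->
  (exists D : I4 -> I4 -> I4 -> C4 -> CC,
     (forall m i j z, pderiv (eta i j) m z (D m i j z)) /\
     (forall z,
        dform2 (fun m i j => D m i j z) i1 i2 i3 = C0 /\
        dform2 (fun m i j => D m i j z) i1 i2 i4 = C0 /\
        dform2 (fun m i j => D m i j z) i1 i3 i4 = z i2 /\
        dform2 (fun m i j => D m i j z) i2 i3 i4 = z i1)) ->
  exists (a3 a4 b3 b4 a q33 q34 q44 : CC),
    forall z,
      let A := Cadd (Cmul a3 (z i3)) (Cmul a4 (z i4)) in
      let B := Cadd (Cmul b3 (z i3)) (Cmul b4 (z i4)) in
      let q := Cadd (Cadd (Cmul q33 (Cmul (z i3) (z i3)))
                          (Cmul q34 (Cmul (z i3) (z i4))))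
                    (Cmul q44 (Cmul (z i4) (z i4))) in
      eta i1 i2 z = C0 /\
      eta i1 i3 z = Cmul (z i2) A /\
      eta i1 i4 z = Cmul (z i2) B /\
      eta i2 i3 z = Cmul (z i1) A /\
      eta i2 i4 z = Cmul (z i1) B /\
      eta i3 i4 z = Cadd (Cmul a (Cmul (z i1) (z i2))) q.
Proof.
  intros Hquad Hint [D [HD Hd]].
  destruct (hom_quad_qform _ (Hquad i1 i2 ltac:(auto))) as [s12 E12].
  destruct (hom_quad_qform _ (Hquad i1 i3 ltac:(auto))) as [s13 E13].
  destruct (hom_quad_qform _ (Hquad i1 i4 ltac:(auto))) as [s14 E14].
  destruct (hom_quad_qform _ (Hquad i2 i3 ltac:(auto))) as [s23 E23].
  destruct (hom_quad_qform _ (Hquad i2 i4 ltac:(auto))) as [s24 E24].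
  destruct (hom_quad_qform _ (Hquad i3 i4 ltac:(auto))) as [s34 E34].
  destruct (contraction_identities eta D HD Hd Hint Hquad s12 s13 s14 s23 s24
              E12 E13 E14 E23 E24) as (G12 & G13 & G14).
  destruct (closedness_identities eta D HD Hd s12 s13 s14 s23 s24 s34
              E12 E13 E14 E23 E24 E34) as (K123 & K124 & K134 & K234).
  destruct (qform_system_solution s12 s13 s14 s23 s24 s34
              G12 G13 G14 K123 K124 K134 K234)
    as (a3 & a4 & b3 & b4 & a & q33 & q34 & q44 & Hs).
  exists a3, a4, b3, b4, a, q33, q34, q44. intro z.
  rewrite E12, E13, E14, E23, E24, E34. exact (Hs z).
Qed.
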